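(* Let $\alpha$ be a graph function on a strongly connected digraph $G$, with heights $y$ and levels $x$, and let $v$ be a vertex with $y_v>\min_u y_u$. Let $x_U=\max\{x_u: y_u<y_v\}$ and $U=\{u: y_u<y_v,\ x_u=x_U\}$. Then there is a vertex $u'\in U$ and an edge $(u',v')$ of $G$ with $v'\notin U$, $\alpha^R_{u'v'}\ge x_U$, and $y_{v'}\ge y_v$.
   Context: $G$ is a strongly connected directed graph (self-loops allowed); $u\to v$ means $(u,v)$ is an edge. A graph function assigns a real weight $\alpha_{uv}$ to each edge. $\alpha_v^{\text{in}}=\max_{u\to v}\alpha_{uv}$, $\alpha_v^{\text{out}}=\max_{v\to w}\alpha_{vw}$, $\rho^R_v=\max\{0,\alpha_v^{\text{out}}-\alpha_v^{\text{in}}\}$. A raising operation at $v$: if $\rho^R_v>0$ add $\rho^R_v/2$ to each incoming edge weight $\alpha_{uv}$ ($u\ne v$) and subtract it from each outgoing $\alpha_{vw}$ ($w\neq v$); otherwise do nothing. Starting from $\alpha$, for any infinite sequence of raising operations in which every vertex occurs infinitely often, the cumulative amount by which each vertex has been raised converges to a limit vector $r^*$ independent of the sequence, and the graph functions converge to the raising-balanced graph function $\alpha^R_{uv}=\alpha_{uv}+r^*_v-r^*_u$. Heights: $y_v=-r^*_v$. Levels: $x_v=\max_{u\to v}\alpha^R_{uv}$. *)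

From HB Require Import structures.
From mathcomp Require Import all_boot all_order all_algebra.
From mathcomp Require Import all_classical all_reals all_analysis.
Set Implicit Arguments. Unset Strict Implicit. Unset Printing Implicit Defensive.
Import Order.TTheory GRing.Theory Num.Theory.
Local Open Scope ring_scope.

Section Defs.
Variables (R : realType) (V : finType).

(* Maximum of f over the finite set {u | P u}; 0 if that set is empty
   (the empty case never arises where it matters). *)
Definition fmax (P : pred V) (f : V -> R) : R :=
  match [pick u | P u] with
  | Some u0 => \big[Num.max/f u0]_(u | P u) f u
  | None => 0
  end.

Variable E : rel V.

Definition strongly_connected : Prop := forall u v, connect E u v.

Definition alpha_in (a : V -> V -> R) (v : V) : R := fmax (fun u => E u v) (fun u => a u v).
Definition alpha_out (a : V -> V -> R) (v : V) : R := fmax (fun w => E v w) (fun w => a v w).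
Definition rhoR (a : V -> V -> R) (v : V) : R := Num.max 0 (alpha_out a v - alpha_in a v).

Definition raise (a : V -> V -> R) (v : V) : V -> V -> R :=
  fun u w =>
    if (w == v) && (u != v) then a u w + rhoR a v / 2
    else if (u == v) && (w != v) then a u w - rhoR a v / 2
    else a u w.

Fixpoint raise_seq (a : V -> V -> R) (s : nat -> V) (n : nat) : V -> V -> R :=
  match n with
  | 0 => a
  | n.+1 => raise (raise_seq a s n) (s n)
  end.

Definition cum_raise (a : V -> V -> R) (s : nat -> V) (n : nat) (v : V) : R :=
  \sum_(k < n | s k == v) rhoR (raise_seq a s k) v / 2.

Definition fair (s : nat -> V) : Prop := forall v N, exists2 n, (N <= n)%N & s n = v.

(* raising-balanced graph function, heights, levels from the limit r *)
Definition balanced (a : V -> V -> R) (r : V -> R) : V -> V -> R :=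
  fun u v => a u v + r v - r u.
Definition height (r : V -> R) (v : V) : R := - r v.
Definition level (a : V -> V -> R) (r : V -> R) (v : V) : R :=
  alpha_in (balanced a r) v.

End Defs.

From HB Require Import structures.
From mathcomp Require Import all_boot all_order all_algebra.
From mathcomp Require Import all_classical all_reals all_analysis.
From mathcomp Require Import lra.
Set Implicit Arguments. Unset Strict Implicit. Unset Printing Implicit Defensive.
Import Order.TTheory GRing.Theory Num.Theory.
Import numFieldNormedType.Exports.
Local Open Scope classical_set_scope.
Local Open Scope ring_scope.

(* The limit [r] of the raising process is the least nonnegative potential whose
   balanced graph function has [alpha_out <= alpha_in] at every vertex, and [r] is
   itself such a potential.  If the claimed edge did not exist, every tight edge
   (weight at least [x_U]) leaving [U] would end in [U], so [U] would contain a terminal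
   class [S] of the graph of tight edges.  Lowering [r] by a small [eps] on [S] keeps the
   graph function raising-balanced and the potential nonnegative, contradicting the
   minimality of [r]. *)

Section FiniteMax.
Variables (R : realType) (T : finType).
Implicit Types (P : pred T) (f : T -> R).

Lemma fmax_ge P f u : P u -> f u <= fmax P f.
Proof.
move=> Pu; rewrite /fmax; case: pickP => [u0 _|noP]; last by rewrite noP in Pu.
exact: le_bigmax_cond.
Qed.

Lemma fmax_attain P f u : P u -> exists2 u', P u' & fmax P f = f u'.
Proof.
move=> Pu; rewrite /fmax; case: pickP => [u0 Pu0|noP]; last by rewrite noP in Pu.
apply: (big_ind (fun z => exists2 u', P u' & z = f u')); first by exists u0.
  move=> _ _ [u1 Pu1 ->] [u2 Pu2 ->].
  by case: (leP (f u1) (f u2)) => _; [exists u2|exists u1].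
by move=> i Pi; exists i.
Qed.

Lemma exists_pos_lower_bound P f : (forall t, P t -> 0 < f t) ->
  exists2 eps : R, 0 < eps & forall t, P t -> eps <= f t.
Proof.
move=> f_gt0; exists (\big[Num.min/1]_(t | P t) f t).
  by apply/bigmin_gtP; split.
by move=> t Pt; exact: bigmin_le_cond.
Qed.

End FiniteMax.

Section Reachability.
Variables (T : finType) (e : rel T).

Lemma connect_last_edge x y :
  connect e x y -> x != y -> exists2 z, connect e x z & e z y.
Proof.
case/connectP=> p + ->; elim: p x => [|b p IH] x /=; first by rewrite eqxx.
case/andP=> exb pb xNl; case: (eqVneq b (last b p)) => [bl|bNl].
  by exists x; rewrite // -bl.
have [z bz zl] := IH b pb bNl.
by exists z => //; exact: connect_trans (connect1 exb) bz.
Qed.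

Lemma exists_terminal_reachable x :
  exists u, connect e x u /\ forall b, connect e u b -> connect e b u.
Proof.
have [u xu minu] := arg_minnP (fun u => #|finset (connect e u)|) (connect0 e x).
exists u; split => // b ub.
have sub : finset (connect e b) \subset finset (connect e u).
  by apply/fintype.subsetP => z; rewrite !inE; exact: connect_trans.
have card_eq : #|finset (connect e b)| = #|finset (connect e u)|.
  by apply/eqP; rewrite eqn_leq subset_leq_card //= minu //; exact: connect_trans xu ub.
have : u \in finset (connect e u) by rewrite inE connect0.
by rewrite -(subset_cardP card_eq sub) inE.
Qed.

Lemma terminal_pred u0 w b :
  (forall z, connect e u0 z -> connect e z u0) ->
  connect e u0 w -> e w b -> exists2 z, connect e u0 z & e z w.
Proof.
move=> term u0w ewb.
have u0b : connect e u0 b := connect_trans u0w (connect1 ewb).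
have bw : connect e b w := connect_trans (term b u0b) u0w.
case: (eqVneq b w) => [bw_eq|bNw]; first by exists w => //; rewrite bw_eq in ewb.
have [z bz ezw] := connect_last_edge bw bNw.
by exists z => //; exact: connect_trans bz.
Qed.

Lemma connect_closed (P : pred T) x y :
  (forall a b, P a -> e a b -> P b) -> P x -> connect e x y -> P y.
Proof.
move=> closedP Px /connectP[p + ->]; elim: p x Px => //= b p IH x Px /andP[exb pb].
exact: IH (closedP _ _ Px exb) pb.
Qed.

End Reachability.

Lemma strongly_connected_in_out_edges (T : finType) (E : rel T) (u1 u2 : T) :
  strongly_connected E -> u1 != u2 ->
  forall w, (exists b, E w b) /\ (exists b, E b w).
Proof.
move=> sc u12 w.
have [w' wNw'] : exists w', w != w'.
  by case: (eqVneq w u1) => [->|wNu1]; [exists u2|exists u1].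
split.
  case/connectP: (sc w w') => [[|b p] /= + w'E]; first by rewrite w'E eqxx in wNw'.
  by case/andP; exists b.
have w'Nw : w' != w by rewrite eq_sym.
by have [z _ ezw] := connect_last_edge (sc w' w) w'Nw; exists z.
Qed.

Definition raising_balanced (R : realType) (V : finType) (E : rel V) (a : V -> V -> R) :=
  forall w, alpha_out E a w <= alpha_in E a w.

Definition tight_edge (R : realType) (V : finType) (E : rel V) (a : V -> V -> R) (c : R) : rel V :=
  fun u w => E u w && (c <= a u w).

Section Potentials.
Variables (R : realType) (V : finType) (E : rel V) (a : V -> V -> R).

Lemma balanced_comp (p q : V -> R) : balanced (balanced a p) q = balanced a (p \+ q).
Proof. by apply/funext => u; apply/funext => w; rewrite /balanced /=; lra. Qed.

(* Each of [alpha_out] and [alpha_in] at [w] moves by at most [p - q]. *)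
Lemma gap_shift_le (c c' : V -> R) w p q :
  (exists b, E w b) -> (exists b, E b w) ->
  (forall z, c z - c' z <= p) -> q <= c w - c' w ->
  alpha_out E (balanced a c) w - alpha_in E (balanced a c) w <=
  alpha_out E (balanced a c') w - alpha_in E (balanced a c') w + 2 * (p - q).
Proof.
move=> [b1 Ewb1] [b2 Eb2w] le_p ge_q; rewrite /alpha_out /alpha_in.
have [w1 Ew1 ->] := fmax_attain (P := fun b => E w b) (fun b => balanced a c w b) Ewb1.
have [w2 Ew2 ->] := fmax_attain (P := fun b => E b w) (fun b => balanced a c' b w) Eb2w.
have := fmax_ge (P := fun b => E w b) (fun b => balanced a c' w b) Ew1.
have := fmax_ge (P := fun b => E b w) (fun b => balanced a c b w) Ew2.
rewrite /balanced; have := le_p w1; have := le_p w2; lra.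
Qed.

End Potentials.

Lemma tight_edge_level (R : realType) (V : finType) (E : rel V) (a : V -> V -> R)
    (P : pred V) u w :
  P w -> tight_edge E a (fmax P (alpha_in E a)) u w ->
  alpha_in E a w = fmax P (alpha_in E a).
Proof.
move=> Pw /andP[Euw tight]; apply/le_anti; rewrite fmax_ge //=.
exact: le_trans tight (fmax_ge (P := fun b => E b w) (fun b => a b w) Euw).
Qed.

Section RaisingProcess.
Variables (R : realType) (V : finType) (E : rel V) (a : V -> V -> R) (s : nat -> V).

Lemma cum_raise0 w : cum_raise E a s 0 w = 0.
Proof. by rewrite /cum_raise big_ord0. Qed.

Lemma cum_raiseS n w : cum_raise E a s n.+1 w =
  cum_raise E a s n w + (if s n == w then rhoR E (raise_seq E a s n) w / 2 else 0).
Proof. by rewrite /cum_raise big_mkcond big_ord_recr /= -big_mkcond. Qed.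

Lemma raise_seq_balanced n : raise_seq E a s n = balanced a (cum_raise E a s n).
Proof.
elim: n => [|n IH].
  by apply/funext => u; apply/funext => w; rewrite /balanced !cum_raise0 /=; lra.
apply/funext => u; apply/funext => w.
rewrite /= /raise [in RHS]/balanced !cum_raiseS IH /balanced.
by case: (eqVneq w (s n)) => [->|wNs]; case: (eqVneq u (s n)) => [->|uNs];
  rewrite ?eqxx ?(negbTE wNs) ?(negbTE uNs) /=; lra.
Qed.

Lemma cum_raise_ge0 n w : 0 <= cum_raise E a s n w.
Proof.
elim: n => [|n IH]; first by rewrite cum_raise0.
rewrite cum_raiseS; case: ifP => _; last by rewrite addr0.
by rewrite addr_ge0 // divr_ge0 // le_max lexx.
Qed.

(* Without in- and out-edges, [alpha_in] and [alpha_out] would take the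
   default value 0 of [fmax]. *)
Hypothesis edges : forall w, (exists b, E w b) /\ (exists b, E b w).

Lemma cum_raise_le_balanced (r' : V -> R) :
  raising_balanced E (balanced a r') -> (forall w, 0 <= r' w) ->
  forall n w, cum_raise E a s n w <= r' w.
Proof.
move=> bal_r' r'_ge0; elim=> [|n IH] w; first by rewrite cum_raise0.
rewrite cum_raiseS; case: ifP => _; last by rewrite addr0.
have [out_w in_w] := edges w.
have below : forall z, cum_raise E a s n z - r' z <= 0 by move=> z; rewrite subr_le0.
have := gap_shift_le a out_w in_w below (lexx _).
rewrite -raise_seq_balanced /rhoR; have := bal_r' w; have := IH w.
set g := alpha_out _ _ w - alpha_in _ _ w => ? ? ?.
have : Num.max 0 g <= 2 * (r' w - cum_raise E a s n w).
  by rewrite ge_max; apply/andP; split; lra.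
lra.
Qed.

Variable r : V -> R.
Hypothesis cvg_r : forall w, cum_raise E a s n w @[n --> \oo] --> r w.

Lemma limit_ge0 w : 0 <= r w.
Proof. by apply: cvgr_to_ge (@cvg_r w) _; apply: nearW => n; exact: cum_raise_ge0. Qed.

Lemma limit_le_balanced (r' : V -> R) :
  raising_balanced E (balanced a r') -> (forall w, 0 <= r' w) ->
  forall w, r w <= r' w.
Proof.
move=> bal_r' r'_ge0 w; apply: cvgr_to_le (@cvg_r w) _.
by apply: nearW => n; exact: cum_raise_le_balanced.
Qed.

Lemma limit_not_lowerable (S : pred V) eps u : S u -> 0 < eps ->
  (forall z, S z -> eps <= r z) ->
  ~ raising_balanced E (balanced (balanced a r) (fun z => if S z then - eps else 0)).
Proof.
move=> Su eps_gt0 eps_le; rewrite balanced_comp => /limit_le_balanced le_r.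
have nonneg z : 0 <= (r \+ fun z => if S z then - eps else 0) z.
  rewrite /=; case: ifP => [/eps_le|_]; last by rewrite addr0 limit_ge0.
  by rewrite subr_ge0.
by have := le_r nonneg u; rewrite /= Su; lra.
Qed.

Hypothesis fair_s : fair s.

Lemma limit_raising_balanced : raising_balanced E (balanced a r).
Proof.
move=> w; rewrite leNgt; apply/negP => gap_pos.
set d := alpha_out E (balanced a r) w - alpha_in E (balanced a r) w.
have d8_gt0 : 0 < d / 8 by rewrite divr_gt0 // subr_gt0.
have [N _ close] : \forall n \near \oo, forall z, `|r z - cum_raise E a s n z| < d / 8.
  by apply: filter_forall => z; exact: cvgr_dist_lt (@cvg_r z) _ d8_gt0.
have [n le_Nn snw] := fair_s w N.
have near_n z : - (d / 8) < r z - cum_raise E a s n z < d / 8.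
  by rewrite -ltr_norml; exact: close n le_Nn z.
have /andP[step_gt _] : - (d / 8) < r w - cum_raise E a s n.+1 w < d / 8.
  by rewrite -ltr_norml; exact: close n.+1 (leqW le_Nn) w.
have [out_w in_w] := edges w.
have le_p z : r z - cum_raise E a s n z <= d / 8 by have /andP[_ /ltW] := near_n z.
have ge_q : - (d / 8) <= r w - cum_raise E a s n w by have /andP[/ltW] := near_n w.
have := gap_shift_le a out_w in_w le_p ge_q.
move: step_gt (le_p w); rewrite cum_raiseS snw eqxx raise_seq_balanced /rhoR.
set g := alpha_out _ _ w - alpha_in _ _ w.
have : g <= Num.max 0 g by rewrite le_max lexx orbT.
have : 0 < d by rewrite subr_gt0.
rewrite -/d; lra.
Qed.

End RaisingProcess.

Section Lowering.
Variables (R : realType) (V : finType) (E : rel V) (a : V -> V -> R) (c eps : R) (S : pred V).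
Hypothesis edges : forall w, (exists b, E w b) /\ (exists b, E b w).
Hypothesis bal_a : raising_balanced E a.
Hypothesis eps_ge0 : 0 <= eps.
Hypothesis level_S : forall w, S w -> alpha_in E a w = c.
Hypothesis tight_closed_S : forall w b, S w -> tight_edge E a c w b -> S b.
Hypothesis tight_pred_S :
  forall w b, S w -> tight_edge E a c w b -> exists2 z, S z & tight_edge E a c z w.
Hypothesis slack_S : forall w b, S w -> E w b -> a w b < c -> 2 * eps <= c - a w b.

Lemma raising_balanced_lower :
  raising_balanced E (balanced a (fun z => if S z then - eps else 0)).
Proof.
move=> w; set q := fun z => _; rewrite /alpha_out.
have q_le0 z : q z <= 0 by rewrite /q; case: ifP; rewrite ?oppr_le0.
have qS z : S z -> q z = - eps by rewrite /q => ->.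
have [[b1 Ewb1] [b2 Eb2w]] := edges w.
have [w1 Ew1 ->] := fmax_attain (P := fun b => E w b) (fun b => balanced a q w b) Ewb1.
have [w2 Ew2 in_w] : exists2 w2, E w2 w & alpha_in E a w = a w2 w.
  exact: (fmax_attain (P := fun b => E b w) (fun b => a b w) Eb2w).
have in_ge z : E z w -> balanced a q z w <= alpha_in E (balanced a q) w.
  exact: (fmax_ge (P := fun b => E b w) (fun b => balanced a q b w)).
have out_le : a w w1 <= a w2 w.
  by rewrite -in_w; apply: le_trans (bal_a w); exact: (fmax_ge (P := fun b => E w b)).
have := in_ge w2 Ew2; rewrite /balanced in in_ge *.
have := q_le0 w1; have := q_le0 w2.
case Sw: (S w); last by rewrite /q Sw; lra.
have level_w : a w2 w = c by rewrite -in_w level_S.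
rewrite (qS w Sw); case: (leP c (a w w1)) => [tight|slack]; last first.
  by have := slack_S Sw Ew1 slack; lra.
have Tww1 : tight_edge E a c w w1 by rewrite /tight_edge Ew1 tight.
have [z Sz /andP[Ezw tight_z]] := tight_pred_S Sw Tww1.
have Sw1 : S w1 := tight_closed_S Sw Tww1.
by have := in_ge z Ezw; rewrite (qS z Sz) (qS w Sw) (qS w1 Sw1); lra.
Qed.

End Lowering.

Section TerminalTightClass.
Variables (R : realType) (V : finType) (E : rel V) (a : V -> V -> R) (c : R) (u0 : V).
Let S := connect (tight_edge E a c) u0.
Hypothesis edges : forall w, (exists b, E w b) /\ (exists b, E b w).
Hypothesis bal_a : raising_balanced E a.
Hypothesis level_S : forall w, S w -> alpha_in E a w = c.
Hypothesis terminal : forall w, S w -> connect (tight_edge E a c) w u0.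

Lemma lower_terminal_tight_class :
  exists2 eps0 : R, 0 < eps0 & forall eps, 0 <= eps <= eps0 ->
    raising_balanced E (balanced a (fun z => if S z then - eps else 0)).
Proof.
have slack_pos (p : V * V) : E p.1 p.2 && (a p.1 p.2 < c) -> 0 < (c - a p.1 p.2) / 2.
  by case/andP=> _ lt; rewrite divr_gt0 // subr_gt0.
have [eps0 eps0_gt0 eps0_le] := exists_pos_lower_bound slack_pos.
exists eps0 => // eps /andP[eps_ge0 eps_le].
apply: raising_balanced_lower edges bal_a eps_ge0 level_S _ _ _.
- by move=> w b u0w Twb; exact: connect_trans u0w (connect1 Twb).
- by move=> w b; exact: terminal_pred terminal.
- move=> w b _ Ewb lt.
  have : eps0 <= (c - a w b) / 2 by apply: (eps0_le (w, b)); rewrite /= Ewb lt.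
  lra.
Qed.

End TerminalTightClass.

Theorem lemma7 (R : realType) (V : finType) (E : rel V) (alpha : V -> V -> R)
  (s : nat -> V) (r : V -> R) :
  strongly_connected E ->
  fair s ->
  (forall w, cum_raise E alpha s n w @[n --> \oo] --> r w) ->
  forall v : V,
    (exists u, height r u < height r v) ->
    let y := height r in
    let x := level E alpha r in
    let aR := balanced alpha r in
    let xU := fmax (fun u => y u < y v) x in
    let U := fun u => (y u < y v) && (x u == xU) in
    exists u' v', [/\ U u', E u' v', ~~ U v', xU <= aR u' v' & y v <= y v'].
Proof.
move=> sc fair_s cvg_r v [u1 lt_u1v] y x aR xU U.
have u1Nv : u1 != v by apply: contraTneq lt_u1v => ->; rewrite ltxx.
have edges := strongly_connected_in_out_edges sc u1Nv.
apply: contrapT => no_exit.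
pose T := tight_edge E aR xU.
have T_closed u w : U u -> T u w -> U w.
  move=> Uu Tuw; have [lt_wv|le_vw] := ltP (y w) (y v).
    by rewrite /U lt_wv; apply/eqP; exact: tight_edge_level Tuw.
  case/andP: Tuw => Euw tight; case: no_exit; exists u, w.
  by split => //; rewrite /U ltNge le_vw.
have [u2 lt_u2v x_u2] := fmax_attain (P := fun u => y u < y v) x lt_u1v.
have Uu2 : U u2 by rewrite /U lt_u2v /xU x_u2 /=.
have [u0 [u2u0 term]] := exists_terminal_reachable T u2.
have SU z : connect T u0 z -> U z.
  exact: connect_closed T_closed (connect_closed T_closed Uu2 u2u0).
have level_S w : connect T u0 w -> alpha_in E aR w = xU by move/SU/andP=> [_ /eqP].
have bal_aR := limit_raising_balanced edges cvg_r fair_s.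
have [eps1 eps1_gt0 lower] := lower_terminal_tight_class edges bal_aR level_S term.
have r_gt0 z : y z < y v -> 0 < r z.
  by rewrite ltrN2 => lt_vz; apply: le_lt_trans lt_vz; exact: limit_ge0 cvg_r v.
have [eps2 eps2_gt0 eps2_le] := exists_pos_lower_bound r_gt0.
pose eps := Num.min eps1 eps2.
apply: (limit_not_lowerable edges cvg_r (connect0 T u0) _ _ (lower eps _)).
- by rewrite lt_min eps1_gt0.
- move=> z /SU/andP[lt_zv _]; apply: le_trans (eps2_le z lt_zv).
  by rewrite ge_min lexx orbT.
- by apply/andP; split; [rewrite le_min !ltW | rewrite ge_min lexx].
Qed.
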